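(* Let $v=[q;w_1,\ldots,w_n]$ be a WVG and $i\neq j$ players with $w_j\ge w_i$. Then $\beta_{\&\{i,j\}}(v_{\&\{i,j\}})\ge\beta_i(v)$; i.e. annexing a player of at least equal weight can never decrease the annexer's Banzhaf index.
   Context: A weighted voting game (WVG) $v=[q;w_1,\ldots,w_n]$ has player set $N=\{1,\ldots,n\}$, nonnegative weights $w_j$ and quota $q$ with $0<q\le \sum_j w_j$; a coalition $S\subseteq N$ is winning iff $\sum_{j\in S}w_j\ge q$. Player $j$ is critical in $S$ if $S$ is winning and $S\setminus\{j\}$ is losing; $\eta_j(v)$ is the number of coalitions in which $j$ is critical; $\beta_j(v)=\eta_j(v)/\sum_k\eta_k(v)$. The merged game $v_{\&T}$ has the same quota, players outside $T$ keep their weights, and the players of $T$ are replaced by one player $\&T$ of weight $\sum_{j\in T}w_j$. *)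

From HB Require Import structures.
From mathcomp Require Import all_boot all_order all_algebra.
Set Implicit Arguments. Unset Strict Implicit. Unset Printing Implicit Defensive.
Import Order.TTheory GRing.Theory Num.Theory.
Local Open Scope ring_scope.

Section WVG.
Variables (R : realFieldType) (P : finType).

Definition winning (q : R) (w : P -> R) (S : {set P}) : bool :=
  q <= \sum_(k in S) w k.

Definition critical (q : R) (w : P -> R) (j : P) (S : {set P}) : bool :=
  winning q w S && ~~ winning q w (S :\ j).

Definition eta (q : R) (w : P -> R) (j : P) : nat :=
  #|[set S : {set P} | critical q w j S]|.

Definition banzhaf (q : R) (w : P -> R) (j : P) : R :=
  (eta q w j)%:R / (\sum_(k : P) eta q w k)%:R.

(* Players of the merged game v_{&{i,j}}: the players outside {i,j}
   (Some k) plus one new player &{i,j} (None). *)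
Definition merged_players (i j : P) : finType :=
  option {k : P | k \notin [set i; j]}.

Definition merged_weight (w : P -> R) (i j : P) (x : merged_players i j) : R :=
  match x with
  | None => w i + w j
  | Some k => w (val k)
  end.

End WVG.

From Pilot Require Import Defs.
From HB Require Import structures.
From mathcomp Require Import all_boot all_order all_algebra.
From mathcomp Require Import zify.
Import Order.TTheory GRing.Theory Num.Theory.
Local Open Scope ring_scope.

(* Write v' for the merged game.  Every coalition S of v' unfolds into the
   coalition [unmerge S] of v (the player &{i,j} becomes i and j), with the
   same weight, so winning is preserved and [unmerge] is injective.
   (1) For a player k outside {i,j}, a coalition in which k is critical in v'
       unfolds into one in which k is critical in v: eta'_k <= eta_k.
   (2) A coalition T in which i is critical in v is determined by T \ {i,j},
       because i is in T and, as w_i <= w_j, j is in T exactly when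
       T \ {i,j} plus j still loses.  Replacing i, j by &{i,j} then yields a
       coalition in which &{i,j} is critical: eta_i <= eta'_&.
   Summing (1) gives  sum' + eta_i <= eta'_& + sum,  and together with (2)
   the elementary inequality [ratio_le] gives eta_i/sum <= eta'_&/sum'. *)

Lemma ratio_le (R : realFieldType) (e e' t t' : nat) :
  (e <= e')%N -> (t' + e <= e' + t)%N -> (e <= t)%N -> (e' <= t')%N ->
  (e%:R / t%:R : R) <= e'%:R / t'%:R.
Proof.
move=> ee' tt' et e't'.
have [->|e_gt0] := posnP e; first by rewrite mul0r divr_ge0.
have t_gt0 : (0 < t)%N by apply: leq_trans et.
have t'_gt0 : (0 < t')%N by apply: leq_trans (leq_trans ee' e't').
rewrite ler_pdivlMr ?ltr0n // mulrAC ler_pdivrMr ?ltr0n // -!natrM ler_nat.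
nia.
Qed.

Section WeightedGames.
Variables (R : realFieldType) (P : finType) (q : R) (w : P -> R).

Lemma winning_mono (A B : {set P}) :
  (forall k, 0 <= w k) -> A \subset B -> winning q w A -> winning q w B.
Proof.
rewrite /winning => w_ge0 AB winA; apply: le_trans winA _.
rewrite [X in _ <= X](big_setID A) /= (setIidPr AB) lerDl.
by apply: sumr_ge0 => k _.
Qed.

Lemma critical_mem (k : P) (T : {set P}) : critical q w k T -> k \in T.
Proof.
case/andP=> winT; apply: contraR => kT.
by rewrite (setDidPl _) // disjoint_sym disjoints1.
Qed.

End WeightedGames.

Arguments winning_mono {R P q w A B}.
Arguments critical_mem {R P q w k T}.

Section Merge.
Variables (R : realFieldType) (P : finType) (i j : P).
Hypothesis neq_ij : i != j.

Variables (q : R) (w : P -> R).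

Local Notation players := (merged_players i j).
Local Notation w' := (merged_weight w (i:=i) (j:=j)).

(* The player of the merged game that represents the original player k. *)
Definition absorb (k : P) : players := insub k.

Lemma absorbE (x : players) (k : P) :
  (absorb k == x) = if x is Some s then k == val s else k \in [set i; j].
Proof.
rewrite /absorb.
case: insubP => [s k_out val_s | k_in]; [subst k|]; case: x => [t|] /=.
- by [].
- by rewrite (negbTE k_out).
- rewrite negbK in k_in; apply/esym/eqP => k_t.
  by have /= := valP t; rewrite -k_t k_in.
- by rewrite negbK in k_in.
Qed.

Lemma absorb_fiber (T : Type) (idx : T) (op : Monoid.com_law idx)
    (F : P -> T) (x : players) :
  \big[op/idx]_(k | absorb k == x) F k =
  if x is Some s then F (val s) else op (F i) (F j).
Proof.
under eq_bigl do rewrite absorbE.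
case: x => [s|] /=; first by rewrite big_pred1_eq.
by rewrite big_setU1 ?inE // big_set1.
Qed.

Definition unmerge (S : {set players}) : {set P} := absorb @^-1: S.

Lemma unmerge_inj : injective unmerge.
Proof.
have absorb_onto (x : players) : exists k, absorb k = x.
  case: x => [s|]; [exists (val s) | exists i]; apply/eqP.
    by rewrite absorbE.
  by rewrite absorbE !inE eqxx.
move=> S1 S2 eqS; apply/setP => x; have [k <-] := absorb_onto x.
by have := congr1 (fun A : {set P} => k \in A) eqS; rewrite /unmerge !inE.
Qed.

(* Unfolding preserves the weight of a coalition, hence winning. *)
Lemma winning_unmerge (S : {set players}) :
  winning q w' S = winning q w (unmerge S).
Proof.
rewrite /winning (partition_big absorb (mem S)); last by move=> k; rewrite inE.
congr (q <= _); apply: eq_bigr => x Sx.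
rewrite (eq_bigl (fun k => absorb k == x)); last first.
  by move=> k; rewrite inE; case: eqP => [->|]; rewrite ?Sx ?andbF.
by rewrite absorb_fiber; case: x {Sx}.
Qed.

Lemma eta_merged_other (s : {k : P | k \notin [set i; j]}) :
  (Defs.eta q w' (Some s) <= Defs.eta q w (val s))%N.
Proof.
rewrite /Defs.eta -(card_imset _ unmerge_inj); apply: subset_leq_card.
apply/subsetP => T /imsetP [S]; rewrite !inE /critical => crit ->.
have -> : unmerge S :\ val s = unmerge (S :\ Some s).
  by apply/setP => k; rewrite !inE -(absorbE (Some s)).
by rewrite -!winning_unmerge.
Qed.

Definition merge_with_annexer (T : {set P}) : {set players} :=
  [set x | if x is Some s then val s \in T else true].

Lemma unmerge_merge (T : {set P}) :
  unmerge (merge_with_annexer T) = T :|: [set i; j].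
Proof.
apply/setP => k; rewrite /unmerge /absorb !inE.
case: insubP => [s k_out val_s | k_in] /=.
- by subst k; rewrite !inE in k_out; rewrite (negbTE k_out) orbF.
- by rewrite !inE in k_in; rewrite (negPn k_in) orbT.
Qed.

Lemma unmerge_merge_del (T : {set P}) :
  unmerge (merge_with_annexer T :\ None) = T :\: [set i; j].
Proof.
apply/setP => k; rewrite /unmerge /absorb !inE.
case: insubP => [s k_out val_s | k_in] /=.
- by subst k; rewrite !inE in k_out; rewrite k_out.
- by rewrite !inE in k_in; rewrite (negPn k_in).
Qed.

Hypotheses (w_ge0 : forall k, 0 <= w k) (wi_le_wj : w i <= w j).

Lemma critical_annexer_mem (T : {set P}) : critical q w i T ->
  (j \in T) = ~~ winning q w ((T :\: [set i; j]) :|: [set j]).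
Proof.
move=> critT; have iT := critical_mem critT.
case/andP: critT; rewrite /winning => winT loseTi.
have rest_j : j \notin T :\: [set i; j] by rewrite !inE eqxx orbT.
rewrite setUC big_setU1 //=.
case jT: (j \in T).
- suff eqTi : T :\ i = j |: (T :\: [set i; j]).
    by move: loseTi; rewrite eqTi big_setU1 // => ->.
  apply/setP => k; rewrite !inE.
  case: (eqVneq k j) => [->|kj]; first by rewrite eq_sym neq_ij jT.
  by rewrite orbF.
- apply/esym/negbF; apply: le_trans winT _.
  rewrite (big_setD1 i iT) lerD // le_eqVlt.
  rewrite (eq_bigl (mem (T :\: [set i; j]))) ?eqxx //.
  move=> k; rewrite !inE.
  by case: (eqVneq k j) => [->|]; rewrite ?jT ?andbF ?orbF // andbC.
Qed.

Lemma critical_annexer_inj : {in [set T | critical q w i T] &,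
  injective (fun T => T :\: [set i; j])}.
Proof.
move=> T1 T2; rewrite !inE => crit1 crit2 eqT.
apply/setP => k; case: (eqVneq k i) => [->|ki].
  by rewrite (critical_mem crit1) (critical_mem crit2).
case: (eqVneq k j) => [->|kj].
  by rewrite !critical_annexer_mem // eqT.
have := congr1 (fun A : {set P} => k \in A) eqT.
by rewrite /= !inE (negbTE ki) (negbTE kj).
Qed.

Lemma eta_annexer_le :
  (Defs.eta q w i <= Defs.eta q w' None)%N.
Proof.
have merge_inj :
    {in [set T | critical q w i T] &, injective merge_with_annexer}.
  move=> T1 T2 c1 c2 eqT; apply: critical_annexer_inj => //.
  by rewrite -unmerge_merge_del eqT unmerge_merge_del.
rewrite /Defs.eta -(card_in_imset merge_inj); apply: subset_leq_card.
apply/subsetP => S /imsetP [T]; rewrite !inE => critT ->.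
case/andP: (critT) => winT loseTi.
rewrite /critical !winning_unmerge unmerge_merge unmerge_merge_del.
apply/andP; split; first exact: winning_mono w_ge0 (subsetUl _ _) winT.
apply: contra loseTi; apply: winning_mono w_ge0 _.
by apply/subsetP => k; rewrite !inE negb_or -andbA => /and3P [-> _ ->].
Qed.

(* Summing (1): the merger removes at least the swings of j from the total,
   apart from the new swings of &{i,j} over those of i. *)
Lemma eta_total_le :
  (\sum_(x : players) Defs.eta q w' x + Defs.eta q w i
    <= Defs.eta q w' None + \sum_(k : P) Defs.eta q w k)%N.
Proof.
rewrite (partition_big absorb predT) //= (bigD1 None) //=.
rewrite [X in (_ <= _ + X)%N](bigD1 None) //= absorb_fiber /=.
set rest := (\sum_(x | x != None) \sum_(k | absorb k == x) _)%N.
have le_rest : (\sum_(x | x != None) Defs.eta q w' x <= rest)%N.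
  apply: leq_sum => -[s|] // _; rewrite absorb_fiber; exact: eta_merged_other.
rewrite -addnA leq_add2l [X in (X <= _)%N]addnC -addnA leq_add2l.
exact: leq_trans le_rest (leq_addl _ _).
Qed.

End Merge.

Theorem mainTheorem13 (R : realFieldType) (P : finType) (q : R) (w : P -> R)
    (i j : P) :
  (forall k, 0 <= w k) ->
  0 < q -> q <= \sum_(k : P) w k ->
  i != j -> w i <= w j ->
  banzhaf q (@merged_weight R P w i j) (None : @merged_players P i j)
    >= banzhaf q w i.
Proof.
move=> w_ge0 _ _ neq_ij wi_le_wj; rewrite /banzhaf.
apply: ratio_le.
- exact: eta_annexer_le.
- exact: eta_total_le.
- by rewrite (bigD1 i) ?leq_addr.
- by rewrite (bigD1 None) ?leq_addr.
Qed.
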